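(* Let $p$ be a prime, $q=p^l$, $m\ge1$, $n=2m$, $N=q^n-1$. Let $r=\rho(q-1)+1$ with $0\leqslant\rho\leqslant n-1$, and let $I\subseteq M_r$ satisfy $\{q,\,q-2,\,|q-4|\}\cap I=\emptyset$ if $\rho$ is odd and $\{1,3\}\cap I=\emptyset$ if $\rho$ is even. Let $\delta=q^{n-\rho}-1$ and $\mathcal{I}_{n-\rho}=\{q^{n-\rho}-q^j\mid 0\le j\le n-\rho-1\}$. Let $x=(x_g)_{g\in\mathbb{F}_{q^n}^*}$ be a codeword of $\mathcal{C}_q(r,I,n)^*$ of Hamming weight $\delta$, let $\Lambda_s=\sum_{g\in\mathbb{F}_{q^n}^*}x_g g^{s}$ for integers $s\ge0$, and let $\sigma(X)=\prod_{g:\,x_g\neq0}(1-gX)=1+\sum_{j=1}^{\delta}\sigma_jX^j$ be the locator polynomial of $x$. Then: (i) $\Lambda_1=\Lambda_2=\cdots=\Lambda_{\delta-1}=0$; (ii) for $u\in[1,\delta-1]$: if $u\notin\mathcal{I}_{n-\rho}$ then $\Lambda_{\delta+u}=0$ and $\sigma_u=0$; if $u\in\mathcal{I}_{n-\rho}$ then $\sigma_u=-\Lambda_{\delta+u}/\Lambda_\delta$ (in particular $\Lambda_\delta\ne0$); (iii) $\sigma(X)=1-\sum_{u\in\mathcal{I}_{n-\rho}}\frac{\Lambda_{\delta+u}}{\Lambda_\delta}X^u$.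
   Context: Let $\alpha$ be a primitive element of $\mathbb{F}_{q^n}$. Every integer $0\le u\le q^n-1$ is written $u=\sum_{i=0}^{n-1}u_iq^i$, $u_i\in\{0,\dots,q-1\}$; $\mathrm{wt}_q(u)=\sum u_i$, $O(u)=\sum_{i\text{ odd}}u_i$, $E(u)=\sum_{i\text{ even}}u_i$. For $-1\le r<n(q-1)$, $Z_r=\{\alpha^u\mid 0<u\le q^n-1,\ \mathrm{wt}_q(u)\le n(q-1)-r-1\}$. For $0\le r\le n(q-1)$ and integer $k\ge0$, $\Theta^{(r)}_k=\{\alpha^u\mid 0\le u\le q^n-1,\ \mathrm{wt}_q(u)=n(q-1)-r,\ |O(u)-E(u)|=k\}$. $M_r$ is the set of even (resp. odd) integers $k\in[0,m(q-1)]$ when $r$ is even (resp. odd). For $I\subseteq M_r$: $\overline I=M_r\setminus I$, $Z_{r,I}=Z_r\cup\bigcup_{k\in\overline I}\Theta^{(r)}_k$. $\mathcal{C}_q(r,I,n)^*$ is the cyclic code of length $N$ over $\mathbb{F}_q$ with coordinates indexed by $\mathbb{F}_{q^n}^*$ (coordinate $i$ labelled $\alpha^i$) consisting of all $x=(x_g)$ with $\sum_g x_g g^{u}=0$ for every $u\in[1,N]$ with $\alpha^u\in Z_{r,I}$. *)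

From HB Require Import structures.
From mathcomp Require Import all_boot all_order all_algebra all_field.
Set Implicit Arguments. Unset Strict Implicit. Unset Printing Implicit Defensive.
Import GRing.Theory.
Local Open Scope ring_scope.

Definition qdigit (q i u : nat) : nat := (u %/ q ^ i) %% q.
Definition wtq (q n u : nat) : nat := (\sum_(i < n) qdigit q i u)%N.
Definition Oq (q n u : nat) : nat := (\sum_(i < n | odd i) qdigit q i u)%N.
Definition Eq (q n u : nat) : nat := (\sum_(i < n | ~~ odd i) qdigit q i u)%N.
Definition absdiff (a b : nat) : nat := (a - b + (b - a))%N.

(* y \in Z_r  (wt_q(u) <= n(q-1) - r - 1 written without truncation) *)
Definition inZ (F : finFieldType) (q n r : nat) (alpha y : F) : Prop :=
  exists u : nat, [/\ (0 < u <= q ^ n - 1)%N,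
                      (wtq q n u + r + 1 <= n * (q - 1))%N & alpha ^+ u = y].

Definition inTheta (F : finFieldType) (q n r k : nat) (alpha y : F) : Prop :=
  exists u : nat, [/\ (u <= q ^ n - 1)%N, (wtq q n u + r = n * (q - 1))%N,
                      absdiff (Oq q n u) (Eq q n u) = k & alpha ^+ u = y].

Definition inM (q m r k : nat) : bool := (k <= m * (q - 1))%N && (odd k == odd r).

Definition inZrI (F : finFieldType) (q n m r : nat) (I : pred nat) (alpha y : F) : Prop :=
  inZ q n r alpha y \/
  exists k : nat, [/\ inM q m r k, ~~ I k & inTheta q n r k alpha y].

Definition Lambda (F : finFieldType) (x : F -> F) (s : nat) : F :=
  \sum_(g : F | g != 0) x g * g ^+ s.

(* x (indexed by F^*, values in F_q = {y | y^q = y}) is in C_q(r,I,n)^* *)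
Definition in_code (F : finFieldType) (q n m r : nat) (I : pred nat) (alpha : F)
  (x : F -> F) : Prop :=
  (forall g : F, g != 0 -> x g ^+ q = x g) /\
  (forall u : nat, (1 <= u <= q ^ n - 1)%N -> inZrI q n m r I alpha (alpha ^+ u) ->
     Lambda x u = 0).

Definition hweight (F : finFieldType) (x : F -> F) : nat :=
  #|[pred g : F | (g != 0) && (x g != 0)]|.

Definition locator (F : finFieldType) (x : F -> F) : {poly F} :=
  \prod_(g : F | (g != 0) && (x g != 0)) (1 - g%:P * 'X).

Definition Iset (q k : nat) : seq nat := [seq (q ^ k - q ^ j)%N | j <- iota 0 k].

(* Put K = n - rho, so that delta = q^K - 1 and r = rho (q - 1) + 1.  For
   0 < s < delta the base-q digits of s and of q^K - 1 - s add up to q - 1 in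
   each of the K lowest positions, so wt_q(s) <= K (q - 1) - 1, with equality
   only if q^K - 1 - s is a power of q; then |O(s) - E(s)| is 1 (K even) or
   q - 2 or q (K odd).  Hence alpha^s lies in Z_r or in a Theta_k with k
   outside I, and Lambda_s = 0.  The same count for delta + u = q^K + (u - 1)
   gives Lambda_(delta+u) = 0 unless q^K - u is a power of q, i.e. u lies in
   I_K (for rho = 0 one uses instead that Lambda has period q^n - 1).
   Finally the locator polynomial satisfies the Newton identities
   sum_i sigma_i Lambda_(s-i) = 0 for s >= delta; as two elements of I_K add
   up to more than delta, solving them for u = 1, 2, ... leaves only
   sigma_u Lambda_delta + Lambda_(delta+u) = 0. *)

From HB Require Import structures.
From mathcomp Require Import all_boot all_order all_algebra all_field zify ring.
Import GRing.Theory.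

Set Implicit Arguments.
Unset Strict Implicit.
Unset Printing Implicit Defensive.

Section Digits.
Variable q : nat.
Hypothesis q_gt1 : 1 < q.

Let q_gt0 : 0 < q. Proof. exact: ltnW. Qed.

Lemma qdigit0 u : qdigit q 0 u = u %% q.
Proof. by rewrite /qdigit expn0 divn1. Qed.

Lemma qdigitS i u : qdigit q i.+1 u = qdigit q i (u %/ q).
Proof. by rewrite /qdigit expnS divnMA. Qed.

Lemma qdigit_small i u : u < q ^ i -> qdigit q i u = 0.
Proof. by move=> lt_u; rewrite /qdigit divn_small ?mod0n. Qed.

Lemma qdigit_lt i u : qdigit q i u < q.
Proof. by rewrite /qdigit ltn_pmod. Qed.

Lemma qdigit_expansion K u : u < q ^ K -> u = \sum_(i < K) qdigit q i u * q ^ i.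
Proof.
elim: K u => [|K IHK] u lt_u; first by move: lt_u; rewrite expn0 big_ord0; case: u.
rewrite big_ord_recl qdigit0 muln1.
under eq_bigr => i _ do rewrite qdigitS expnS mulnCA.
rewrite -big_distrr /= -IHK; last by rewrite ltn_divLR // -expnSr.
by rewrite addnC mulnC -divn_eq.
Qed.

Lemma qdigit_compl K s i : s < q ^ K -> i < K ->
  qdigit q i (q ^ K - 1 - s) = q - 1 - qdigit q i s.
Proof.
have split_compl s' K' : s' < q ^ K'.+1 ->
    q ^ K'.+1 - 1 - s' = (q ^ K' - 1 - s' %/ q) * q + (q - 1 - s' %% q).
  move=> lt_s'; have : s' %/ q < q ^ K' by rewrite ltn_divLR // -expnSr.
  have := ltn_pmod s' q_gt0; rewrite {1}(divn_eq s' q) expnSr; nia.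
elim: i K s => [|i IHi] [|K] s // lt_s lt_i.
  by rewrite !qdigit0 split_compl // modnMDl modn_small //; lia.
rewrite !qdigitS split_compl // divnMDl // [(q - 1 - _) %/ q]divn_small ?addn0; last lia.
by apply: IHi; rewrite // ltn_divLR // -expnSr.
Qed.

Lemma qdigit_shift K w i : w < q ^ K -> qdigit q i (q ^ K + w) = qdigit q i w + (i == K).
Proof.
elim: i K w => [|i IHi] [|K] w.
- by rewrite expn0 ltnS leqn0 => /eqP->; rewrite !qdigit0 mod0n modn_small.
- by rewrite !qdigit0 expnSr modnMDl addn0.
- rewrite expn0 ltnS leqn0 => /eqP->.
  by rewrite addn0 !qdigitS (divn_small q_gt1) div0n addn0.
- move=> lt_w; rewrite !qdigitS expnSr divnMDl // IHi //.
  by rewrite ltn_divLR // -expnSr.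
Qed.

Lemma sum_qdigit_compl (P : pred nat) n K s : K <= n -> s < q ^ K ->
  \sum_(i < n | P i) qdigit q i s + \sum_(i < n | P i) qdigit q i (q ^ K - 1 - s)
  = \sum_(i < K | P i) (q - 1).
Proof.
move=> le_Kn lt_s; rewrite (big_ord_widen_cond n P (fun=> q - 1) le_Kn) big_mkcondr.
rewrite -big_split; apply: eq_bigr => i _ /=; case: ltnP => [lt_iK | le_Ki].
  by rewrite qdigit_compl //; have := qdigit_lt i s; lia.
have le_qK : q ^ K <= q ^ i by rewrite leq_pexp2l.
by rewrite !qdigit_small //; lia.
Qed.

Lemma sum_qdigit_shift (P : pred nat) n K w : K < n -> w < q ^ K ->
  \sum_(i < n | P i) qdigit q i (q ^ K + w) = \sum_(i < n | P i) qdigit q i w + P K.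
Proof.
move=> lt_Kn lt_w; under eq_bigr do rewrite qdigit_shift //.
rewrite big_split /=; congr (_ + _).
case PK: (P K).
  rewrite (bigD1 (Ordinal lt_Kn)) //= eqxx big1 // => i /andP[_ ne_iK].
  by case: eqP => // eq_iK; case/eqP: ne_iK; apply: val_inj.
by rewrite big1 // => i Pi; case: eqP => // eq_iK; rewrite -eq_iK Pi in PK.
Qed.

End Digits.

Lemma sum_odd_ord_const K c : \sum_(i < K | odd i) c = K./2 * c.
Proof.
elim: K => [|K IHK]; first by rewrite big_ord0.
rewrite big_mkcond big_ord_recr -big_mkcond /= IHK.
have -> : uphalf K = K./2 + odd K by lia.
by case: (odd K); rewrite ?mulnDl ?mul1n ?addn0.
Qed.

Lemma sum_even_ord_const K c : \sum_(i < K | ~~ odd i) c = uphalf K * c.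
Proof.
elim: K => [|K IHK]; first by rewrite big_ord0.
rewrite big_mkcond big_ord_recr -big_mkcond /= IHK.
have -> : K./2.+1 = uphalf K + ~~ odd K by lia.
by case: (odd K); rewrite ?mulnDl ?mul1n ?addn0.
Qed.

Lemma Oq_add_Eq q n u : Oq q n u + Eq q n u = wtq q n u.
Proof. by rewrite /wtq (bigID (fun i : 'I_n => odd i)). Qed.

Section Weights.
Variables q n : nat.
Hypothesis q_gt1 : 1 < q.

Lemma wtq_compl K s : K <= n -> s < q ^ K ->
  wtq q n s + wtq q n (q ^ K - 1 - s) = K * (q - 1).
Proof.
move=> le_Kn lt_s; transitivity (\sum_(i < K) (q - 1)).
  exact: (sum_qdigit_compl q_gt1 xpredT).
by rewrite sum_nat_const card_ord.
Qed.

Lemma Oq_compl K s : K <= n -> s < q ^ K ->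
  Oq q n s + Oq q n (q ^ K - 1 - s) = K./2 * (q - 1).
Proof. by move=> le_Kn lt_s; rewrite /Oq sum_qdigit_compl // sum_odd_ord_const. Qed.

Lemma Eq_compl K s : K <= n -> s < q ^ K ->
  Eq q n s + Eq q n (q ^ K - 1 - s) = uphalf K * (q - 1).
Proof.
move=> le_Kn lt_s.
by rewrite (sum_qdigit_compl q_gt1 (fun i => ~~ odd i)) // sum_even_ord_const.
Qed.

Lemma wtq_shift K w : K < n -> w < q ^ K -> wtq q n (q ^ K + w) = (wtq q n w).+1.
Proof. by move=> lt_Kn lt_w; rewrite -addn1; exact: (sum_qdigit_shift q_gt1 xpredT). Qed.

Lemma Oq_shift K w : K < n -> w < q ^ K -> Oq q n (q ^ K + w) = Oq q n w + odd K.
Proof. by move=> lt_Kn lt_w; exact: (sum_qdigit_shift q_gt1 odd). Qed.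

Lemma Eq_shift K w : K < n -> w < q ^ K -> Eq q n (q ^ K + w) = Eq q n w + ~~ odd K.
Proof. by move=> lt_Kn lt_w; exact: (sum_qdigit_shift q_gt1 (fun i => ~~ odd i)). Qed.

Lemma wtq_gt0 u : 0 < u < q ^ n -> 0 < wtq q n u.
Proof.
case/andP=> u_gt0 /(qdigit_expansion q_gt1) def_u; rewrite lt0n.
apply: contraTneq u_gt0 => /eqP; rewrite sum_nat_eq0 => /forallP digits0.
by rewrite def_u big1 // => i _; rewrite (eqP (digits0 i)).
Qed.

Lemma wtq_eq1 u : u < q ^ n -> wtq q n u = 1 -> exists2 a, a < n & u = q ^ a.
Proof.
move=> /(qdigit_expansion q_gt1) def_u wt1.
have [a da_neq0] : exists a : 'I_n, qdigit q a u != 0.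
  apply/existsP; apply: contraT; rewrite negb_exists => /forallP digits0.
  by move: wt1; rewrite /wtq big1 // => i _; apply/eqP; rewrite -[_ == 0]negbK digits0.
have [da1 others0] : qdigit q a u = 1 /\ forall i, i != a -> qdigit q i u = 0.
  move: wt1; rewrite /wtq (bigD1 a) //= => sum1.
  set S := \sum_(i < n | _) _ in sum1.
  have : S == 0 by apply/eqP; lia.
  rewrite /S sum_nat_eq0 => /forallP others0; split; first lia.
  by move=> i ne_ia; apply/eqP; exact: implyP (others0 i) ne_ia.
exists a => //; rewrite def_u (bigD1 a) //= big1 ?addn0 ?da1 ?mul1n // => i ne_ia.
by rewrite others0.
Qed.

End Weights.

Lemma Oq_le q m u : 1 < q -> Oq q (2 * m) u <= m * (q - 1).
Proof.
move=> q_gt1; apply: (@leq_trans (\sum_(i < 2 * m | odd i) (q - 1))).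
  by apply: leq_sum => i _; have := qdigit_lt q_gt1 i u; lia.
by rewrite sum_odd_ord_const mul2n doubleK.
Qed.

Lemma Eq_le q m u : 1 < q -> Eq q (2 * m) u <= m * (q - 1).
Proof.
move=> q_gt1; apply: (@leq_trans (\sum_(i < 2 * m | ~~ odd i) (q - 1))).
  by apply: leq_sum => i _; have := qdigit_lt q_gt1 i u; lia.
by rewrite sum_even_ord_const mul2n uphalf_double.
Qed.

Lemma IsetP q K u : reflect (exists2 a, a < K & u = q ^ K - q ^ a) (u \in Iset q K).
Proof.
apply: (iffP mapP) => [[a]|[a]]; rewrite ?mem_iota => lt_aK ->; exists a => //.
by rewrite mem_iota.
Qed.

Section Iset.
Variables q K : nat.
Hypothesis q_gt1 : 1 < q.

Lemma big_Iset (R : Type) (idx : R) (op : Monoid.law idx) (f : nat -> R) :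
  \big[op/idx]_(u <- Iset q K) f u = \big[op/idx]_(j < K) f (q ^ K - q ^ j).
Proof. by rewrite big_map -{1}[K]subn0 -/(index_iota 0 K) big_mkord. Qed.

Lemma Iset_range u : u \in Iset q K -> 0 < u <= q ^ K - 1.
Proof.
case/IsetP=> a lt_aK ->; have : q ^ a < q ^ K by rewrite ltn_exp2l.
have : 0 < q ^ a by rewrite expn_gt0 ltnW.
lia.
Qed.

Lemma Iset_uniq : uniq (Iset q K).
Proof.
rewrite map_inj_in_uniq ?iota_uniq // => a b; rewrite !mem_iota /= => lt_aK lt_bK /eqP.
rewrite eqn_sub2lE ?leq_pexp2l ?(ltnW q_gt1) ?(ltnW lt_aK) ?(ltnW lt_bK) //.
by move/eqP; apply: expnI.
Qed.

Lemma Iset_add_gt i j : i \in Iset q K -> j \in Iset q K -> q ^ K - 1 < i + j.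
Proof.
case/IsetP=> a lt_aK -> /IsetP[b lt_bK ->].
have le_q2K : 2 * q ^ K.-1 <= q ^ K.
  by rewrite -(ltn_predK lt_aK) expnS leq_mul2r q_gt1 orbT.
have le_qK1 c : c < K -> q ^ c <= q ^ K.-1.
  by move=> lt_cK; rewrite leq_pexp2l ?(ltnW q_gt1) // -ltnS (ltn_predK lt_cK).
have := le_qK1 a lt_aK; have := le_qK1 b lt_bK.
have : 0 < q ^ K.-1 by rewrite expn_gt0 ltnW.
lia.
Qed.

End Iset.

Definition excluded_diff (q : nat) (b : bool) (k : nat) : bool :=
  if b then [|| k == q - 2, k == q | k == absdiff q 4] else (k == 1) || (k == 3).

(* For r = rho (q - 1) + 1 and n = K + rho, such exponents t give alpha ^+ t in
   Z_r (first case) or in Theta^(r)_k with k excluded from I (second case). *)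
Definition defset_exponent (q n K t : nat) : Prop :=
  wtq q n t + 2 <= K * (q - 1) \/
  wtq q n t + 1 = K * (q - 1) /\ excluded_diff q (odd K) (absdiff (Oq q n t) (Eq q n t)).

Lemma mul_half_uphalf K c :
  K * c = K./2 * c + uphalf K * c /\ uphalf K * c = K./2 * c + odd K * c.
Proof. by rewrite -!mulnDl; split; congr (_ * _); lia. Qed.

Section DefiningSet.
Variables q n K : nat.
Hypotheses (q_gt1 : 1 < q) (le_Kn : K <= n).

Lemma defset_exponent_low s : 0 < s < q ^ K - 1 -> defset_exponent q n K s.
Proof.
move=> /andP[s_gt0 lt_s]; set v := q ^ K - 1 - s.
have lt_sK : s < q ^ K by lia.
have le_qKn : q ^ K <= q ^ n by rewrite leq_pexp2l // ltnW.
have wtv_gt0 : 0 < wtq q n v by apply: wtq_gt0 => //; lia.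
have := wtq_compl q_gt1 le_Kn lt_sK; have := Oq_compl q_gt1 le_Kn lt_sK.
have := Eq_compl q_gt1 le_Kn lt_sK; have := Oq_add_Eq q n v; have := Oq_add_Eq q n s.
rewrite /defset_exponent /excluded_diff /absdiff -/v.
have [-> ->] := mul_half_uphalf K (q - 1).
by case: (odd K); rewrite ?mul1n ?mul0n; lia.
Qed.

Lemma defset_exponent_shift u : K < n -> 0 < u < q ^ K - 1 -> u \notin Iset q K ->
  defset_exponent q n K (q ^ K + (u - 1)).
Proof.
move=> lt_Kn /andP[u_gt0 lt_u] uNI; set w := u - 1; set v := q ^ K - 1 - w.
have lt_wK : w < q ^ K by lia.
have le_qKn : q ^ K <= q ^ n by rewrite leq_pexp2l // ltnW.
have lt_vn : v < q ^ n by lia.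
have wtv_gt1 : 1 < wtq q n v.
  have wtv_gt0 : 0 < wtq q n v by apply: wtq_gt0; lia.
  rewrite ltn_neqAle wtv_gt0 andbT eq_sym; apply/eqP => /(wtq_eq1 q_gt1 lt_vn)[a _ def_v].
  have lt_aK : a < K by rewrite -(ltn_exp2l _ _ q_gt1) -def_v; lia.
  by case/negP: uNI; apply/IsetP; exists a => //; lia.
have := wtq_compl q_gt1 le_Kn lt_wK; have := Oq_compl q_gt1 le_Kn lt_wK.
have := Eq_compl q_gt1 le_Kn lt_wK; have := Oq_add_Eq q n v; have := Oq_add_Eq q n w.
have := wtq_shift q_gt1 lt_Kn lt_wK; have := Oq_shift q_gt1 lt_Kn lt_wK.
have := Eq_shift q_gt1 lt_Kn lt_wK.
rewrite /defset_exponent /excluded_diff /absdiff -/v.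
have [-> ->] := mul_half_uphalf K (q - 1).
by case: (odd K); rewrite ?mul1n ?mul0n; lia.
Qed.

End DefiningSet.

Lemma inM_absdiff q m r a b : a <= m * (q - 1) -> b <= m * (q - 1) ->
  a + b + r = 2 * m * (q - 1) -> inM q m r (absdiff a b).
Proof. by rewrite -mulnA /inM /absdiff; move: (m * _) => c; lia. Qed.

Section Locator.
Variables (F : finFieldType) (x : F -> F).
Local Notation w := (hweight x).
Local Notation sigma := (locator x).
Local Open Scope ring_scope.

Lemma size_locator : (size sigma <= w.+1)%N.
Proof.
have size_factor (g : F) : g != 0 -> size (1 - g%:P * 'X) = 2%N.
  move=> g_neq0; rewrite addrC -mulNr -polyCN size_MXaddC polyC_eq0 oppr_eq0.
  by rewrite (negbTE g_neq0) size_polyC oppr_eq0 g_neq0.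
rewrite size_prod => [|g /andP[g_neq0 _]]; last by rewrite -size_poly_eq0 size_factor.
rewrite (eq_bigr (fun=> 2%N)) => [|g /andP[g_neq0 _]]; last exact: size_factor.
by rewrite sum_nat_const -/w; lia.
Qed.

Lemma locator_coef0 : sigma`_0 = 1.
Proof.
rewrite -horner_coef0 horner_prod big1 // => g _.
by rewrite hornerD hornerN hornerM !hornerC hornerX mulr0 subr0.
Qed.

Lemma root_locator g : g != 0 -> x g != 0 -> sigma.[g^-1] = 0.
Proof.
move=> g_neq0 xg_neq0; rewrite horner_prod (bigD1 g) /=; last by rewrite g_neq0.
by rewrite hornerD hornerN hornerM !hornerC hornerX divff // subrr mul0r.
Qed.

Lemma sum_weighted_horner (P : {poly F}) d : (size P <= d)%N ->
  \sum_(g : F | g != 0) x g * P.[g] = \sum_(i < d) P`_i * Lambda x i.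
Proof.
move=> size_P; under eq_bigr => g _ do rewrite (horner_coef_wide _ size_P) mulr_sumr.
rewrite exchange_big; apply: eq_bigr => i _.
by rewrite /Lambda mulr_sumr; apply: eq_bigr => g _; rewrite mulrCA.
Qed.

Lemma locator_Newton s : (w <= s)%N ->
  \sum_(i < w.+1) sigma`_i * Lambda x (s - i) = 0.
Proof.
move=> le_ws; under eq_bigr => i _ do rewrite /Lambda mulr_sumr.
rewrite exchange_big big1 // => g g_neq0.
have [xg0 | xg_neq0] := eqVneq (x g) 0.
  by rewrite big1 // => i _; rewrite xg0 mul0r mulr0.
transitivity (x g * g ^+ s * sigma.[g^-1]); last by rewrite root_locator ?mulr0.
rewrite (horner_coef_wide _ size_locator) mulr_sumr; apply: eq_bigr => i _.
have le_is : (i <= s)%N by have := ltn_ord i; lia.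
by rewrite exprVn (expfB_cond (x := g)) ?(negbTE g_neq0) //; ring.
Qed.

(* Pair x with X times the product of (X - g) over the support minus one
   point h: on the left only h survives, on the right only Lambda_w. *)
Lemma Lambda_weight_neq0 : (0 < w)%N ->
  (forall s, (1 <= s <= w - 1)%N -> Lambda x s = 0) -> Lambda x w != 0.
Proof.
move=> w_gt0 Lambda_low; have /card_gt0P[h supp_h] := w_gt0.
have /andP[h_neq0 xh_neq0] := supp_h.
pose rs := enum [predD1 [pred g | (g != 0) && (x g != 0)] & h].
pose P := 'X * \prod_(g <- rs) ('X - g%:P).
have size_P : size P = w.+1.
  rewrite /P mulrC size_mulX ?monic_neq0 ?monic_prod_XsubC // size_prod_XsubC -cardE.
  by move: w_gt0; rewrite /hweight (cardD1 h) supp_h.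
have := sum_weighted_horner (eq_leq size_P).
rewrite big_ord_recr /= [X in _ = X + _]big1 => [|i _]; last first.
  have [-> | i_gt0] := posnP i; first by rewrite coefXM mul0r.
  by rewrite Lambda_low ?mulr0 //; have := ltn_ord i; lia.
rewrite add0r (bigD1 h) //= big1 ?addr0 => [|g /andP[g_neq0 ne_gh]]; last first.
  have [-> | xg_neq0] := eqVneq (x g) 0; first by rewrite mul0r.
  have /rootP Qg0 : root (\prod_(g' <- rs) ('X - g'%:P)) g.
    by rewrite root_prod_XsubC mem_enum !inE ne_gh g_neq0 xg_neq0.
  by rewrite hornerM Qg0 !mulr0.
have Qh_neq0 : ~~ root (\prod_(g <- rs) ('X - g%:P)) h.
  by rewrite root_prod_XsubC mem_enum !inE eqxx.
move=> xhPh; apply: contra_neq (_ : x h * P.[h] != 0) => [Lw0 | ].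
  by rewrite xhPh Lw0 mulr0.
by rewrite mulf_neq0 // hornerM hornerX mulf_neq0.
Qed.

(* Newton's identity at s = w + u: for 0 < i < u, either sigma_i = 0 or
   i lies in J, and then u - i does not, so Lambda_(w+u-i) = 0. *)
Lemma locator_coef_sparse (J : pred nat) : (0 < w)%N ->
    (forall s, (1 <= s <= w - 1)%N -> Lambda x s = 0) ->
    (forall i, (1 <= i <= w - 1)%N -> ~~ J i -> Lambda x (w + i) = 0) ->
    (forall i j, J i -> J j -> (w < i + j)%N) ->
  forall u, (1 <= u <= w)%N -> sigma`_u = - (Lambda x (w + u) / Lambda x w).
Proof.
move=> w_gt0 Lambda_low Lambda_off_J J_sum_gt.
have Lw_neq0 := Lambda_weight_neq0 w_gt0 Lambda_low.
elim/ltn_ind=> u IHu /andP[u_gt0 le_uw]; have lt_uw1 : (u < w.+1)%N by [].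
have := locator_Newton (leq_addr u w).
rewrite (bigD1 ord0) // (bigD1 (Ordinal lt_uw1)) -?val_eqE /=; last by rewrite -lt0n.
rewrite big1 => [|[i lt_iw1]]; last first.
  rewrite -!val_eqE /= => /andP[ne_i0 ne_iu].
  have [lt_ui | lt_iu] := ltnP u i; first by rewrite Lambda_low ?mulr0 //; lia.
  rewrite IHu; [|lia|lia]; case J_i: (J i).
    have J_ui : ~~ J (u - i)%N by apply/negP => /(J_sum_gt i _ J_i); lia.
    by rewrite (_ : w + u - i = w + (u - i))%N ?(Lambda_off_J (u - i)%N) ?mulr0 //; lia.
  by rewrite Lambda_off_J ?J_i ?mul0r ?oppr0 ?mul0r //; lia.
rewrite locator_coef0 subn0 mul1r addnK addr0 => /eqP; rewrite addr_eq0 => /eqP ->.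
by rewrite mulNr opprK mulfK.
Qed.

Lemma Lambda_periodic s : Lambda x (#|F|.-1 + s) = Lambda x s.
Proof.
apply: eq_bigr => g g_neq0; congr (_ * _); rewrite exprD.
suff -> : g ^+ #|F|.-1 = 1 by rewrite mul1r.
apply: (mulfI g_neq0); rewrite mulr1 -exprS prednK ?expf_card //.
exact/ltnW/card_finNzRing_gt1.
Qed.

End Locator.

Section SparsePoly.
Variable R : nzRingType.
Local Open Scope ring_scope.

Lemma coef_sum_monomials (s : seq nat) (c : nat -> R) i : uniq s ->
  (\sum_(u <- s) (c u)%:P * 'X^u)`_i = if i \in s then c i else 0.
Proof.
move=> uniq_s; rewrite coef_sum; under eq_bigr do rewrite coefCM coefXn.
case: ifP => [s_i | /negbT sN_i].
  rewrite (big_rem i) //= eqxx mulr1 big1_seq ?addr0 // => u /andP[_].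
  by rewrite mem_rem_uniq // !inE => /andP[ne_ui _]; rewrite eq_sym (negbTE ne_ui) mulr0.
rewrite big1_seq // => u /andP[_ s_u].
by rewrite (_ : i == u = false) ?mulr0 //; apply: contraNF sN_i => /eqP->.
Qed.

Lemma eq_1_sub_sum_monomials (P : {poly R}) (s : seq nat) (c : nat -> R) d :
    uniq s -> {subset s <= [pred u | 0 < u <= d]%N} -> (size P <= d.+1)%N -> P`_0 = 1 ->
    (forall u, (0 < u <= d)%N -> P`_u = - c u) ->
    (forall u, (0 < u <= d)%N -> u \notin s -> c u = 0) ->
  P = 1 - \sum_(u <- s) (c u)%:P * 'X^u.
Proof.
move=> uniq_s s_range size_P P0 P_coef c_off_s; apply/polyP => i.
rewrite coefB coef1 coef_sum_monomials //.
have [-> | i_gt0] := posnP i.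
  by rewrite P0 ifN ?subr0 //; apply/negP => /s_range; rewrite inE ltnn.
have [le_id | lt_di] := leqP i d.
  rewrite P_coef ?i_gt0 // sub0r; case: ifP => // sN_i.
  by rewrite c_off_s ?i_gt0 ?sN_i // oppr0.
rewrite nth_default ?ifN ?subr0 ?(gtn_eqF i_gt0) //; last exact: leq_trans size_P lt_di.
by apply/negP => /s_range /andP[_]; rewrite leqNgt lt_di.
Qed.

End SparsePoly.

Section CodeWord.
Variables (F : finFieldType) (q m rho : nat) (I : pred nat) (alpha : F) (x : F -> F).
Local Notation n := (2 * m).
Local Notation K := (2 * m - rho).
Hypotheses (q_gt1 : 1 < q) (lt_rho_n : rho < n).
Hypothesis I_excl :
  if odd rho then [&& ~~ I q, ~~ I (q - 2) & ~~ I (absdiff q 4)] else ~~ I 1 && ~~ I 3.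
Hypothesis x_code : in_code q n m (rho * (q - 1) + 1) I alpha x.

Lemma Lambda_eq0_defset t :
  1 <= t <= q ^ n - 1 -> defset_exponent q n K t -> Lambda x t = 0%R.
Proof.
case: x_code => _ x_orth t_range t_def; apply: (x_orth t t_range).
have lt_tN : t <= q ^ n - 1 by case/andP: t_range.
have split_n : n * (q - 1) = K * (q - 1) + rho * (q - 1) by rewrite -mulnDl subnK // ltnW.
rewrite /defset_exponent in t_def.
case: t_def => [wt_low | [wt_top excl_t]].
  left; exists t; split=> //; rewrite split_n.
  by move: wt_low; move: (K * _) (rho * _) => A B; lia.
have wt_r : wtq q n t + (rho * (q - 1) + 1) = K * (q - 1) + rho * (q - 1).
  by move: wt_top; move: (K * _) (rho * _) => A B; lia.
right; exists (absdiff (Oq q n t) (Eq q n t)); split.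
- by apply: inM_absdiff; rewrite ?Oq_le ?Eq_le // Oq_add_Eq wt_r -split_n.
- have odd_K : odd K = odd rho by rewrite (oddB (ltnW lt_rho_n)) oddM.
  move: excl_t I_excl; rewrite /excluded_diff odd_K.
  by case: (odd rho) => [/or3P[] /eqP-> /and3P[] | /orP[] /eqP-> /andP[]].
- by exists t; split; rewrite // split_n.
Qed.

Lemma Lambda_eq0_low s : 1 <= s <= q ^ K - 1 - 1 -> Lambda x s = 0%R.
Proof.
move=> s_range; have le_qKn : q ^ K <= q ^ n by rewrite leq_pexp2l ?leq_subr // ltnW.
apply: Lambda_eq0_defset; first lia.
by apply: defset_exponent_low; rewrite ?leq_subr //; lia.
Qed.

Hypothesis card_F : #|F| = q ^ n.

Lemma Lambda_eq0_shift u : 1 <= u <= q ^ K - 1 - 1 -> u \notin Iset q K ->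
  Lambda x (q ^ K - 1 + u) = 0%R.
Proof.
move=> u_range uNI; have [rho0 | rho_gt0] := posnP rho.
  have -> : q ^ K - 1 = #|F|.-1 by rewrite rho0 subn0 card_F subn1.
  by rewrite Lambda_periodic Lambda_eq0_low.
have lt_Kn : K < n by lia.
have le_qKn : q ^ K.+1 <= q ^ n by rewrite leq_pexp2l // ltnW.
have le_2qK : 2 * q ^ K <= q ^ K.+1 by rewrite expnS leq_mul2r q_gt1 orbT.
have qK_gt0 : 0 < q ^ K by rewrite expn_gt0 ltnW.
rewrite (_ : q ^ K - 1 + u = q ^ K + (u - 1)); last lia.
apply: Lambda_eq0_defset; first lia.
by apply: defset_exponent_shift; rewrite ?leq_subr //; lia.
Qed.

End CodeWord.

Local Open Scope ring_scope.

Theorem proposition5p1 (F : finFieldType) (p l m rho : nat) (alpha : F)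
  (I : pred nat) (x : F -> F) :
  prime p -> (0 < l)%N -> (0 < m)%N ->
  let q := (p ^ l)%N in let n := (2 * m)%N in let N := (q ^ n - 1)%N in
  #|F| = (q ^ n)%N -> N.-primitive_root alpha ->
  (rho <= n - 1)%N ->
  let r := (rho * (q - 1) + 1)%N in
  (forall k, I k -> inM q m r k) ->
  (if odd rho then [&& ~~ I q, ~~ I (q - 2)%N & ~~ I (absdiff q 4)]
   else ~~ I 1%N && ~~ I 3%N) ->
  let delta := (q ^ (n - rho) - 1)%N in
  in_code q n m r I alpha x -> hweight x = delta ->
  let sigma := locator x in
  [/\ (forall s : nat, (1 <= s <= delta - 1)%N -> Lambda x s = 0),
      (forall u : nat, (1 <= u <= delta - 1)%N ->
         (u \notin Iset q (n - rho) -> Lambda x (delta + u) = 0 /\ sigma`_u = 0) /\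
         (u \in Iset q (n - rho) ->
            Lambda x delta != 0 /\ sigma`_u = - (Lambda x (delta + u) / Lambda x delta)))
    & sigma = 1 - \sum_(j < n - rho)
                    (Lambda x (delta + (q ^ (n - rho) - q ^ j)) / Lambda x delta)%:P
                    * 'X ^+ (q ^ (n - rho) - q ^ j)%N].
Proof.
move=> p_prime l_gt0 m_gt0 q n N card_F _ le_rho r _ I_excl delta x_code wt_x sigma.
have q_gt1 : (1 < q)%N by rewrite -(expn0 p) ltn_exp2l ?prime_gt1.
have lt_rho_n : (rho < n)%N by lia.
have delta_gt0 : (0 < delta)%N.
  by rewrite subn_gt0 -(expn0 q) ltn_exp2l // subn_gt0.
have Lambda_low := Lambda_eq0_low q_gt1 lt_rho_n I_excl x_code.
have Lambda_off := Lambda_eq0_shift q_gt1 lt_rho_n I_excl x_code card_F.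
have Lambda_delta_neq0 : Lambda x delta != 0.
  by have := Lambda_weight_neq0 (x := x); rewrite wt_x; apply.
pose c u := Lambda x (delta + u) / Lambda x delta.
have sigma_coef u : (1 <= u <= delta)%N -> sigma`_u = - c u.
  have := locator_coef_sparse (x := x) (J := mem (Iset q (n - rho))).
  by rewrite wt_x; apply=> //; apply: Iset_add_gt.
split=> // [u u_range | ].
  split=> [uNI | uI]; last by split=> //; apply: sigma_coef; lia.
  have Lambda_u := Lambda_off u u_range uNI.
  by split=> //; rewrite /sigma sigma_coef /c ?Lambda_u ?mul0r ?oppr0 //; lia.
rewrite -(big_Iset q (n - rho) _ (fun u => (c u)%:P * 'X^u)).
apply: eq_1_sub_sum_monomials (Iset_uniq _ q_gt1) (Iset_range q_gt1) _ _ sigma_coef _.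
- by have := size_locator x; rewrite wt_x.
- exact: locator_coef0.
move=> u /andP[u_gt0 le_u_delta] uNI; rewrite /c Lambda_off ?mul0r ?u_gt0 //=.
have delta_I : delta \in Iset q (n - rho).
  by apply/IsetP; exists 0%N; rewrite ?expn0 ?subn_gt0.
change (u <= delta - 1)%N; rewrite subn1 -ltnS prednK // ltn_neqAle le_u_delta andbT.
by apply: contraNneq uNI => ->.
Qed.
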